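(* Let $n\geq 2$ and let $\mathcal{G}=(\mathcal{V},\mathcal{E})$ be a directed graph on $\mathcal{V}=\{1,\ldots,n\}$ in which every node has at least one outgoing edge, with hyperlink matrix $A$, let $m\in(0,1)$, and let $x^*$ be the PageRank vector. Let $\{\phi(k)\}_{k\geq 0}$ be a sequence of subsets $\phi(k)\subset\mathcal{V}$ such that every $i\in\mathcal{V}$ belongs to $\phi(k)$ for infinitely many $k$. Consider the algorithm with initial states $x_i(0)=z_i(0)=m/n$ for all $i$, and for $k\geq 0$ and each $i\in\mathcal{V}$, $$x_i(k+1)=x_i(k)+\sum_{j\in\mathcal{L}_i^{\text{in}}\cap\phi(k)}\frac{1-m}{n_j}z_j(k),$$ $$z_i(k+1)=\begin{cases}\displaystyle\sum_{j\in\mathcal{L}_i^{\text{in}}\cap\phi(k)}\frac{1-m}{n_j}z_j(k)&\text{if } i\in\phi(k),\\ \displaystyle z_i(k)+\sum_{j\in\mathcal{L}_i^{\text{in}}\cap\phi(k)}\frac{1-m}{n_j}z_j(k)&\text{otherwise.}\end{cases}$$ Then $x(k)\leq x(k+1)\leq x^*$ for all $k\geq 0$.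
   Context: Write $(i,j)\in\mathcal{E}$ if page $i$ has a link to page $j$. $\mathcal{L}_j^{\text{out}}=\{i:(j,i)\in\mathcal{E}\}$, $\mathcal{L}_i^{\text{in}}=\{j:(j,i)\in\mathcal{E}\}$, and $n_j=|\mathcal{L}_j^{\text{out}}|\geq 1$. The hyperlink matrix $A=(a_{ij})$ is defined by $a_{ij}=1/n_j$ if $i\in\mathcal{L}_j^{\text{out}}$ and $a_{ij}=0$ otherwise (column stochastic). The PageRank vector $x^*$ satisfies $x^*=(1-m)Ax^*+\frac{m}{n}\mathbf{1}_n$ and $\mathbf{1}_n^Tx^*=1$. Here $x(k)=(x_1(k),\ldots,x_n(k))^T$ and inequalities between vectors are entrywise. *)

From HB Require Import structures.
From mathcomp Require Import all_boot all_order all_algebra.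
Set Implicit Arguments. Unset Strict Implicit. Unset Printing Implicit Defensive.
Import Order.TTheory GRing.Theory Num.Theory.
Local Open Scope ring_scope.

(* A directed graph on 'I_n: E j i means "page j links to page i", i.e. (j,i) in E. *)

Definition outdeg (n : nat) (E : rel 'I_n) (j : 'I_n) : nat :=
  #|[set i | E j i]|.

Definition hyperlink (R : fieldType) (n : nat) (E : rel 'I_n) : 'M[R]_n :=
  \matrix_(i, j) (if E j i then (outdeg E j)%:R^-1 else 0).

Definition is_pagerank (R : fieldType) (n : nat) (E : rel 'I_n) (m : R)
  (xs : 'cV[R]_n) : Prop :=
  xs = (1 - m) *: (hyperlink R E *m xs) + const_mx (m / n%:R)
  /\ \sum_(i < n) xs i ord0 = 1.

Fixpoint pr_state (R : fieldType) (n : nat) (E : rel 'I_n) (m : R)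
  (phi : nat -> {set 'I_n}) (k : nat) : ('I_n -> R) * ('I_n -> R) :=
  match k with
  | 0 => (fun _ => m / n%:R, fun _ => m / n%:R)
  | k'.+1 =>
      let s := pr_state E m phi k' in
      let x := s.1 in let z := s.2 in
      let inc i := \sum_(j < n | E j i && (j \in phi k'))
                      (1 - m) / (outdeg E j)%:R * z j in
      (fun i => x i + inc i,
       fun i => if i \in phi k' then inc i else z i + inc i)
  end.

Definition pr_x (R : fieldType) (n : nat) (E : rel 'I_n) (m : R)
  (phi : nat -> {set 'I_n}) (k : nat) : 'I_n -> R := (pr_state E m phi k).1.
Definition pr_z (R : fieldType) (n : nat) (E : rel 'I_n) (m : R)
  (phi : nat -> {set 'I_n}) (k : nat) : 'I_n -> R := (pr_state E m phi k).2.

From HB Require Import structures.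
From mathcomp Require Import all_boot all_order all_algebra.
From mathcomp Require Import ring lra.
Set Implicit Arguments. Unset Strict Implicit. Unset Printing Implicit Defensive.
Import Order.TTheory GRing.Theory Num.Theory.
Local Open Scope ring_scope.

(* Write B for the nonnegative matrix (1 - m) A, whose column sums are 1 - m.
   At each step every active page j hands its residual z_j, weighted by B,
   to the x- and z-entries of the pages it links to; this adds a nonnegative
   amount to x and preserves the invariant x* - x(k) = B (x* - x(k) + z(k)).
   As z(k) >= 0, the negative part u of x* - x(k) satisfies u <= B u, and
   summing entries gives sum u <= (1 - m) sum u, so u = 0. *)

Section SubstochasticFixpoint.

Variables (R : realFieldType) (n : nat) (B : 'I_n -> 'I_n -> R) (m : R).
Hypotheses (m_gt0 : 0 < m) (B_ge0 : forall i j, 0 <= B i j)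
  (B_colsum : forall j, \sum_i B i j = 1 - m).

Lemma subinvariant_eq0 (u : 'I_n -> R) :
  (forall i, 0 <= u i) -> (forall i, u i <= \sum_j B i j * u j) ->
  forall i, u i = 0.
Proof.
move=> u_ge0 u_le.
have sum_le : \sum_i u i <= (1 - m) * \sum_i u i.
  apply: le_trans (ler_sum _ (fun i _ => u_le i)) _.
  rewrite exchange_big /= mulr_sumr; apply: ler_sum => j _.
  by rewrite -mulr_suml B_colsum.
have sum_eq0 : \sum_i u i = 0.
  apply/eqP; rewrite eq_le sumr_ge0 // andbT -(pmulr_rle0 _ m_gt0).
  by move: sum_le; rewrite mulrBl mul1r; lra.
by move=> i; apply: (psumr_eq0P (fun i _ => u_ge0 i) sum_eq0).
Qed.

Lemma fixpoint_ge0 (w z : 'I_n -> R) :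
  (forall i, 0 <= z i) -> (forall i, w i = \sum_j B i j * (w j + z j)) ->
  forall i, 0 <= w i.
Proof.
move=> z_ge0 wE.
pose u i := Num.max (- w i) 0.
have Nw_le_u i : - w i <= u i by rewrite le_max lexx.
have u_ge0 i : 0 <= u i by rewrite le_max lexx orbT.
have u_le i : u i <= \sum_j B i j * u j.
  rewrite ge_max sumr_ge0 ?andbT => [|j _]; last exact: mulr_ge0.
  rewrite wE -sumrN; apply: ler_sum => j _; rewrite -mulrN.
  apply: ler_wpM2l => //; apply: le_trans (Nw_le_u j).
  by rewrite opprD lerBlDr lerDl.
move=> i; have := Nw_le_u i.
by rewrite (subinvariant_eq0 u_ge0 u_le i) oppr_le0.
Qed.

End SubstochasticFixpoint.

Section PageRankAlgorithm.

Variables (R : realFieldType) (n : nat) (E : rel 'I_n) (m : R).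
Variable phi : nat -> {set 'I_n}.
Hypotheses (outdeg_gt0 : forall j, (0 < outdeg E j)%N) (m_gt0 : 0 < m)
  (m_lt1 : m < 1).

Local Notation x := (pr_x E m phi).
Local Notation z := (pr_z E m phi).

Definition pr_weight (i j : 'I_n) : R :=
  if E j i then (1 - m) / (outdeg E j)%:R else 0.

Definition pr_sent (k : nat) (j : 'I_n) : R :=
  if j \in phi k then z k j else 0.

Lemma pr_weight_ge0 i j : 0 <= pr_weight i j.
Proof.
rewrite /pr_weight; case: (E j i) => //.
by rewrite divr_ge0 ?ler0n ?subr_ge0 ?ltW.
Qed.

Lemma pr_weight_colsum j : \sum_i pr_weight i j = 1 - m.
Proof.
rewrite /pr_weight -big_mkcond /= sumr_const.
have -> : #|[pred i | E j i]| = outdeg E j.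
  by rewrite /outdeg; apply: eq_card => i; rewrite inE.
by rewrite -[_ *+ _]mulr_natr divfK // pnatr_eq0 -lt0n outdeg_gt0.
Qed.

Lemma pr_received k i :
  \sum_(j < n | E j i && (j \in phi k)) (1 - m) / (outdeg E j)%:R * z k j
  = \sum_j pr_weight i j * pr_sent k j.
Proof.
rewrite big_mkcond; apply: eq_bigr => j _; rewrite /pr_weight /pr_sent.
by case: (E j i); case: (j \in phi k); rewrite ?mul0r ?mulr0.
Qed.

Lemma pr_xS k i : x k.+1 i = x k i + \sum_j pr_weight i j * pr_sent k j.
Proof. by rewrite /pr_x /= pr_received. Qed.

Lemma pr_zS k i :
  z k.+1 i = z k i - pr_sent k i + \sum_j pr_weight i j * pr_sent k j.
Proof.
by rewrite /pr_z /= -/(pr_z _ _ _ k) pr_received /pr_sent; case: ifP => _;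
  rewrite ?subrr ?add0r ?subr0.
Qed.

Lemma pr_received_ge0 k i : (forall j, 0 <= z k j) ->
  0 <= \sum_j pr_weight i j * pr_sent k j.
Proof.
move=> z_ge0; apply: sumr_ge0 => j _; rewrite mulr_ge0 ?pr_weight_ge0 //.
by rewrite /pr_sent; case: ifP.
Qed.

Lemma pr_z_ge0 k i : 0 <= z k i.
Proof.
elim: k i => [|k IH] i; first by rewrite divr_ge0 ?ler0n ?ltW.
rewrite pr_zS addr_ge0 ?pr_received_ge0 // /pr_sent.
by case: ifP; rewrite ?subrr ?subr0.
Qed.

Lemma pr_x_leS k i : x k i <= x k.+1 i.
Proof. by rewrite pr_xS lerDl pr_received_ge0 // => j; apply: pr_z_ge0. Qed.

Lemma pagerank_gapE (xs : 'cV[R]_n) : is_pagerank E m xs ->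
  forall k i, xs i ord0 - x k i
    = \sum_j pr_weight i j * (xs j ord0 - x k j + z k j).
Proof.
move=> [xsE _]; elim=> [|k IH] i.
  under eq_bigr => j _ do rewrite subrK.
  rewrite {1}xsE !mxE addrK mulr_sumr; apply: eq_bigr => j _.
  by rewrite !mxE /pr_weight; case: (E j i); rewrite ?mul0r ?mulr0 // mulrA.
rewrite pr_xS opprD addrA IH -sumrB; apply: eq_bigr => j _.
rewrite pr_xS pr_zS; ring.
Qed.

Lemma pr_x_le_pagerank (xs : 'cV[R]_n) : is_pagerank E m xs ->
  forall k i, x k i <= xs i ord0.
Proof.
move=> xsP k i; rewrite -subr_ge0.
have gapE := pagerank_gapE xsP k.
exact: (fixpoint_ge0 m_gt0 pr_weight_ge0 pr_weight_colsum (pr_z_ge0 k) gapE).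
Qed.

End PageRankAlgorithm.

Theorem lemma3 (R : realFieldType) (n : nat) (E : rel 'I_n) (m : R)
  (xs : 'cV[R]_n) (phi : nat -> {set 'I_n}) :
  (2 <= n)%N ->
  (forall j : 'I_n, (1 <= outdeg E j)%N) ->
  0 < m < 1 ->
  is_pagerank E m xs ->
  (forall (i : 'I_n) (N : nat), exists k, (N <= k)%N /\ i \in phi k) ->
  forall (k : nat) (i : 'I_n),
    pr_x E m phi k i <= pr_x E m phi k.+1 i /\ pr_x E m phi k.+1 i <= xs i ord0.
Proof.
(* Monotonicity and the upper bound hold for every n and every schedule phi. *)
move=> _ outdeg_gt0 /andP[m_gt0 m_lt1] xsP _ k i; split.
  exact: pr_x_leS.
exact: pr_x_le_pagerank.
Qed.
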